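(* Let $\phi:R\to S$ be a homomorphism of differential rings (rings equipped with the same $m$ commuting derivations $\Delta=\{\delta_1,\dots,\delta_m\}$, and $\phi$ commuting with each $\delta_j$). Suppose $\Lambda$ is a coherent subset of $R\{x\}$, and let $\Lambda^\phi:=\{f^\phi:f\in\Lambda\}\subseteq S\{x\}$, where $f^\phi$ is obtained from $f$ by applying $\phi$ to its coefficients. If $H_\Lambda^\phi\neq 0$, then $H_{\Lambda^\phi}=H_\Lambda^\phi$ and $\Lambda^\phi$ is coherent.
   Context: All rings are commutative and unital. For a ring $R$ with commuting derivations $\Delta=\{\delta_1,\dots,\delta_m\}$ and $x=(x_1,\dots,x_n)$, $R\{x\}$ is the ring of differential polynomials, i.e. the polynomial ring $R[\Theta x]$ in the algebraic indeterminates $\Theta x=\{\theta x_i\}$, where $\Theta$ is the free commutative monoid generated by $\Delta$. The indeterminates are ranked by: $\delta_m^{e_m}\cdots\delta_1^{e_1}x_i<\delta_m^{r_m}\cdots\delta_1^{r_1}x_j$ iff $(\sum e_k,i,e_m,\dots,e_1)<(\sum r_k,j,r_m,\dots,r_1)$ lexicographically. For $f\in R\{x\}\setminus R$: the leader $v_f$ is the highest-ranked indeterminate appearing in $f$; the degree $d_f$ is the degree of $v_f$ in $f$; the separant $S_f=\partial f/\partial v_f$; the initial $I_f$ is the leading coefficient of $f$ as a polynomial in $v_f$. For finite $\Lambda$, $H_\Lambda:=\prod_{f\in\Lambda}I_fS_f$. A subset $\Lambda\subset R\{x\}\setminus R$ is coherent if (1) (autoreduced) for all $f\neq g$ in $\Lambda$,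 no proper derivative $\theta v_f$ ($\theta\neq 1$) of $v_f$ appears in $g$, and if $v_f$ appears in $g$ it does so with degree $<d_f$; and (2) whenever $f\neq g$ in $\Lambda$ and $\theta_f,\theta_g\in\Theta$ satisfy $\theta_fv_f=\theta_gv_g=:v$ with $v$ the least indeterminate for which this happens for $f,g$, there is $N$ with $H_\Lambda^N(S_g\theta_ff-S_f\theta_gg)\in(\Lambda)_v$, where $(\Lambda)_v$ is the (algebraic) ideal generated by $\{\theta f: f\in\Lambda,\theta\in\Theta, v_{\theta f}<v\}$. The map $\phi$ is extended to $R\{x\}\to S\{x\}$ coefficientwise, giving $H_\Lambda^\phi$. *)

From HB Require Import structures.
From mathcomp Require Import all_boot all_order all_algebra.
From mathcomp Require Import finmap.
From mathcomp Require Import monalg.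

Set Implicit Arguments.
Unset Strict Implicit.
Unset Printing Implicit Defensive.

Import GRing.Theory.
Local Open Scope fset_scope.
Local Open Scope ring_scope.

(* delta_1, ..., delta_m, indexed here by 'I_m (delta_{k+1} = d k).      *)

Definition is_derivation (R : comNzRingType) (D : R -> R) : Prop :=
  (forall a b : R, D (a + b) = D a + D b) /\
  (forall a b : R, D (a * b) = a * D b + D a * b).

Definition diff_ring_str (m : nat) (R : comNzRingType) (d : 'I_m -> R -> R)
  : Prop :=
  (forall k, is_derivation (d k)) /\
  (forall j k (a : R), d j (d k a) = d k (d j a)).

Section DiffPoly.
Variables (n m : nat).

(* Theta = free commutative monoid on Delta, encoded by exponent vectors:
   th : {ffun 'I_m -> nat} stands for delta_m^(th m-1) ... delta_1^(th 0). *)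
Definition Theta := {ffun 'I_m -> nat}.
Definition theta1 : Theta := [ffun => 0%N].

(* The algebraic indeterminates Theta x: (i, e) stands for theta_e x_(i+1). *)
Definition dvar := ('I_n * Theta)%type.

Definition theta_var (th : Theta) (v : dvar) : dvar :=
  (v.1, [ffun k => (th k + v.2 k)%N]).

Definition delta_var (k : 'I_m) (v : dvar) : dvar :=
  theta_var [ffun j => nat_of_bool (j == k)] v.

(* The ranking: delta_m^e_m...delta_1^e_1 x_i < delta_m^r_m...delta_1^r_1 x_j
   iff (sum e, i, e_m, ..., e_1) < (sum r, j, r_m, ..., r_1) lexicographically. *)
Fixpoint lex_lt (s t : seq nat) : bool :=
  match s, t with
  | x :: s', y :: t' => (x < y)%N || ((x == y) && lex_lt s' t')
  | _, _ => false
  end.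

Definition rank_key (v : dvar) : seq nat :=
  [:: (\sum_k v.2 k)%N, val v.1 & rev [seq v.2 k | k <- enum 'I_m]].

Definition rank_lt (v w : dvar) : bool := lex_lt (rank_key v) (rank_key w).

Definition dmonom := {cmonom dvar}.

Section Ring.
Variable R : comNzRingType.

Definition dpoly := {malg R[dmonom]}.

Implicit Types (p f g : dpoly) (v w : dvar).

Definition appears v p : bool := has (fun M : dmonom => M v != 0%N) (enum_fset (msupp p)).

Definition vars p : seq dvar :=
  undup (flatten [seq enum_fset (finsupp (cmonom_val M)) | M : dmonom <- enum_fset (msupp p)]).

(* leader: the highest ranked indeterminate appearing in p (None iff p in R) *)
Definition rank_max v w : dvar := if rank_lt v w then w else v.
Definition leader p : option dvar :=
  foldr (fun v o => Some (if o is Some w then rank_max v w else v)) None (vars p).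

Definition degv v p : nat := (\max_(M <- msupp p) M v)%N.

Definition pderiv v p : dpoly :=
  \sum_(M <- msupp p) << p@_M * (M v)%:R *g divcm M (ucm v) >>.

Definition coef_in v (k : nat) p : dpoly :=
  \sum_(M <- msupp p | M v == k) << p@_M *g divcm M (expcmn (ucm v) k) >>.

Definition separant p : dpoly :=
  if leader p is Some v then pderiv v p else 0.
Definition initial p : dpoly :=
  if leader p is Some v then coef_in v (degv v p) p else 0.

Definition H_of (L : {fset dpoly}) : dpoly :=
  \prod_(f <- enum_fset L) (initial f * separant f).

Definition in_ideal (P : dpoly -> Prop) (q : dpoly) : Prop :=
  exists r : seq (dpoly * dpoly),
    (forall pr, pr \in r -> P pr.2) /\ q = \sum_(pr <- r) pr.1 * pr.2.

Section Deriv.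
Variable d : 'I_m -> R -> R.

(* extension of the derivation d k to R{x}: d k (theta x_i) = d k theta x_i *)
Definition dmon (k : 'I_m) (M : dmonom) : dpoly :=
  \sum_(v <- enum_fset (finsupp (cmonom_val M)))
     << (M v)%:R *g divcm M (ucm v) >> * << (1 : R) *g ucm (delta_var k v) >>.

Definition dext (k : 'I_m) p : dpoly :=
  \sum_(M <- msupp p) (<< d k (p@_M) *g M >> + p@_M *: dmon k M).

Definition theta (th : Theta) p : dpoly :=
  foldr (fun k q => iter (th k) (dext k) q) p (enum 'I_m).

Definition Lambda_lt (L : {fset dpoly}) v (q : dpoly) : Prop :=
  exists f th, [/\ f \in L, q = theta th f &
    exists w, leader (theta th f) = Some w /\ rank_lt w v].

Definition coherent (L : {fset dpoly}) : Prop :=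
  [/\ (* L is a subset of R{x} \ R *)
      (forall f, f \in L -> leader f != None),
      (* (1) autoreduced *)
      (forall f g vf, f \in L -> g \in L -> f != g -> leader f = Some vf ->
         (forall th, th != theta1 -> ~~ appears (theta_var th vf) g) /\
         (appears vf g -> (degv vf g < degv vf f)%N))
    & (* (2) coherence of the least common derivatives *)
      (forall f g vf vg thf thg, f \in L -> g \in L -> f != g ->
         leader f = Some vf -> leader g = Some vg ->
         theta_var thf vf = theta_var thg vg ->
         (forall thf' thg', theta_var thf' vf = theta_var thg' vg ->
            ~~ rank_lt (theta_var thf' vf) (theta_var thf vf)) ->
         exists N : nat,
           in_ideal (Lambda_lt L (theta_var thf vf))
             (H_of L ^+ N * (separant g * theta thf f - separant f * theta thg g)))].
End Deriv.
End Ring.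

Definition map_dpoly (R S : comNzRingType) (phi : R -> S) (p : dpoly R) : dpoly S :=
  \sum_(M <- msupp p) << phi (p@_M) *g M >>.

End DiffPoly.

(* The coefficient map f |-> f^phi commutes with the derivations (as phi does),
   hence with every theta, and with partial differentiation.  So whenever the
   images of the separant and the initial of f are nonzero, which H_Lambda^phi
   <> 0 guarantees for f in Lambda, f^phi has the same leader, degree,
   separant and initial as f.  Then autoreducedness passes to Lambda^phi, two
   elements of Lambda cannot have the same image (they would share leader and
   degree), and H_(Lambda^phi) = H_Lambda^phi.  For condition (2) apply phi to
   the given ideal membership: theta f maps to theta f^phi, whose leader stays
   below v; it still has a leader because differentiating with respect to a
   suitable derivative of the leader of f^phi gives back the nonzero separant. *)

From HB Require Import structures.
From mathcomp Require Import all_boot all_order all_algebra.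
From mathcomp Require Import finmap.
From mathcomp Require Import monalg.

Set Implicit Arguments.
Unset Strict Implicit.
Unset Printing Implicit Defensive.

Import GRing.Theory.
Local Open Scope fset_scope.
Local Open Scope ring_scope.

(** * Ranking of the derivatives *)

Lemma lex_ltxx s : lex_lt s s = false.
Proof. by elim: s => //= x s ->; rewrite ltnn eqxx. Qed.

Lemma lex_lt_trans s t u : lex_lt s t -> lex_lt t u -> lex_lt s u.
Proof.
elim: s t u => [|x s IH] [|y t] [|z u] //=.
case/orP=> [xy|/andP[/eqP-> st]]; case/orP=> [yz|/andP[/eqP<- tu]].
- by rewrite (ltn_trans xy yz).
- by rewrite xy.
- by rewrite yz.
- by rewrite eqxx (IH _ _ st tu) orbT.
Qed.

Lemma lex_lt_total s t : size s = size t -> s != t -> lex_lt s t || lex_lt t s.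
Proof.
elim: s t => [|x s IH] [|y t] //= [/eqP Hs] st.
case: (ltngtP x y) => //= Exy; subst y; apply: IH; first exact/eqP.
by apply: contra st => /eqP ->.
Qed.

Section Ranking.
Variables n m : nat.
Implicit Types u v w : dvar n m.

Definition dorder v := (\sum_k v.2 k)%N.

Definition rank_le v w := (v == w) || rank_lt v w.

Lemma rank_ltxx v : rank_lt v v = false.
Proof. exact: lex_ltxx. Qed.

Lemma rank_lt_trans u v w : rank_lt u v -> rank_lt v w -> rank_lt u w.
Proof. exact: lex_lt_trans. Qed.

Lemma rank_key_inj : injective (@rank_key n m).
Proof.
move=> [i th] [j th'] [_ /val_inj <- /(congr1 rev)]; rewrite !revK => eth.
congr (_, _); apply/ffunP => k.
by move/eq_in_map: eth => /(_ k); apply; rewrite mem_enum.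
Qed.

Lemma rank_lt_total v w : v != w -> rank_lt v w || rank_lt w v.
Proof.
move=> vw; apply: lex_lt_total; first by rewrite /= !size_rev !size_map.
by apply: contra vw => /eqP /rank_key_inj ->.
Qed.

Lemma rank_le_trans u v w : rank_le u v -> rank_le v w -> rank_le u w.
Proof.
rewrite /rank_le => /orP[/eqP->//|uv] /orP[/eqP<-|vw]; first by rewrite uv orbT.
by rewrite (rank_lt_trans uv vw) orbT.
Qed.

Lemma rank_le_anti u v : rank_le u v -> rank_le v u -> u = v.
Proof.
rewrite /rank_le => /orP[/eqP//|uv] /orP[/eqP//|vu].
by have := rank_lt_trans uv vu; rewrite rank_ltxx.
Qed.

Lemma rank_le_total v w : rank_le v w || rank_le w v.
Proof.
have [->|vw] := eqVneq v w; first by rewrite /rank_le eqxx.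
by rewrite /rank_le (negbTE vw) eq_sym (negbTE vw) rank_lt_total.
Qed.

Lemma rank_le_dorder v w : rank_le v w -> (dorder v <= dorder w)%N.
Proof.
by case/orP=> [/eqP->//|]; rewrite /rank_lt /dorder /= => /orP[/ltnW|/andP[/eqP-> _]].
Qed.

(* [leader p] unfolds to [max_rank (vars p)]. *)
Definition max_rank (s : seq (dvar n m)) : option (dvar n m) :=
  foldr (fun v o => Some (if o is Some w then rank_max v w else v)) None s.

Lemma rank_le_max v w : rank_le v (rank_max v w) /\ rank_le w (rank_max v w).
Proof.
rewrite /rank_max; case: ifP => vw; split; rewrite /rank_le ?eqxx ?vw ?orbT //.
by have := rank_le_total v w; rewrite /rank_le vw orbF => /orP[/eqP->|->]; rewrite ?eqxx.
Qed.

Lemma max_rankP s w : max_rank s = Some w ->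
  w \in s /\ forall u, u \in s -> rank_le u w.
Proof.
elim: s w => [|v s IH] w //=; case E: (max_rank s) => [w'|] [<-]; last first.
  case: s E {IH} => // _; split=> [|u]; rewrite !inE // => /eqP->.
  by rewrite /rank_le eqxx.
have [w's le_w'] := IH _ E; have [le_v le_w] := rank_le_max v w'.
split; first by rewrite /rank_max inE; case: ifP; rewrite ?eqxx ?w's ?orbT.
by move=> u; rewrite inE => /orP[/eqP->//|/le_w'/rank_le_trans]; apply.
Qed.

Lemma max_rank_None s : max_rank s = None -> s = [::].
Proof. by case: s. Qed.

Lemma max_rank_eq s w : w \in s -> (forall u, u \in s -> rank_le u w) ->
  max_rank s = Some w.
Proof.
move=> ws maxw; case E: (max_rank s) => [w'|]; last by rewrite (max_rank_None E) in ws.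
by have [w's maxw'] := max_rankP E; rewrite (rank_le_anti (maxw _ w's) (maxw' _ ws)).
Qed.

End Ranking.

(** * Sums over the support and occurring variables *)

Section MalgSum.
Variables (K : choiceType) (G V : zmodType) (F : K -> G -> V).

Definition msum (p : {malg G[K]}) : V := \sum_(k <- msupp p) F k p@_k.

Hypothesis F0 : forall k, F k 0 = 0.

Lemma msumEw (d : {fset K}) p : msupp p `<=` d -> msum p = \sum_(k <- d) F k p@_k.
Proof. by move=> le; apply: big_fset_incl => // k _ /mcoeff_outdom ->. Qed.

Lemma msumU c k : msum << c *g k >> = F k c.
Proof. by rewrite (msumEw msuppU_le) big_seq_fset1 mcoeffUU. Qed.

Hypothesis FD : forall k, {morph F k : x y / x + y}.

Lemma msum_is_nmod_morphism : nmod_morphism msum.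
Proof.
split=> [|p q]; first by rewrite /msum msupp0 big_seq_fset0.
rewrite (msumEw (msuppD_le p q)) (msumEw (fsubsetUl _ (msupp q))).
rewrite (msumEw (fsubsetUr (msupp p) _)) -big_split.
by apply: eq_bigr => k _; rewrite mcoeffD FD.
Qed.

End MalgSum.

Lemma malgUM (K : monomType) (T : nzRingType) (a b : T) (M N : K) :
  << a *g M >> * << b *g N >> = << a * b *g mmul M N >> :> {malg T[K]}.
Proof. by rewrite malgM_def fgmulUU. Qed.

Lemma malgZU (K : choiceType) (T : nzRingType) (c a : T) (M : K) :
  c *: << a *g M >> = << c * a *g M >> :> {malg T[K]}.
Proof. by apply/malgP => k; rewrite mcoeffZ !mcoeffU mulrnAr. Qed.

Section Appears.
Variables (n m : nat) (T : comNzRingType).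
Implicit Types (p q : dpoly n m T) (u v w : dvar n m).

Lemma appearsP u p : reflect (exists2 M, M \in msupp p & M u != 0%N) (appears u p).
Proof. exact: hasP. Qed.

Lemma mem_vars u p : (u \in vars p) = appears u p.
Proof.
rewrite mem_undup; apply/flatten_mapP/appearsP => -[M HM Mu]; exists M => //.
  by rewrite cmE_neq0.
by rewrite -cmE_neq0.
Qed.

Lemma leaderP p w : leader p = Some w ->
  appears w p /\ forall u, appears u p -> rank_le u w.
Proof.
move=> /max_rankP[wp maxw]; rewrite -mem_vars; split=> // u.
by rewrite -mem_vars; apply: maxw.
Qed.

Lemma leader_eq p w : appears w p -> (forall u, appears u p -> rank_le u w) ->
  leader p = Some w.
Proof.
move=> wp maxw; apply: max_rank_eq; first by rewrite mem_vars.
by move=> u; rewrite mem_vars; apply: maxw.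
Qed.

Lemma appears_leader u p : appears u p -> leader p != None.
Proof. by rewrite -mem_vars /leader; case: (vars p). Qed.

Lemma appearsU u (c : T) (M : dmonom n m) : appears u << c *g M >> -> M u != 0%N.
Proof. by case/appearsP=> N /(fsubsetP msuppU_le); rewrite inE => /eqP->. Qed.

Lemma appearsD u p q : appears u (p + q) -> appears u p || appears u q.
Proof.
case/appearsP=> M /(fsubsetP (msuppD_le p q)); rewrite in_fsetU => /orP[] HM Mu.
  by apply/orP; left; apply/appearsP; exists M.
by apply/orP; right; apply/appearsP; exists M.
Qed.

Lemma appears_sum u (I : eqType) (r : seq I) (F : I -> dpoly n m T) :
  appears u (\sum_(i <- r) F i) -> exists2 i, i \in r & appears u (F i).
Proof.
elim: r => [|i r IH]; first by rewrite big_nil => /appearsP[M]; rewrite msupp0.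
rewrite big_cons => /appearsD/orP[Hi|/IH[j jr Hj]]; first by exists i; rewrite ?mem_head.
by exists j; rewrite // in_cons jr orbT.
Qed.

Lemma appearsZ u c p : appears u (c *: p) -> appears u p.
Proof.
by case/appearsP=> M /(fsubsetP (msuppZ_le c p)) HM Mu; apply/appearsP; exists M.
Qed.

End Appears.

(** * Partial derivatives and the derivations of R{x} *)

Section PartialDerivative.
Variables (n m : nat) (T : comNzRingType).
Implicit Types (p q : dpoly n m T) (u v w : dvar n m) (M : dmonom n m).

Definition pderiv_term u M (c : T) : dpoly n m T :=
  << c * (M u)%:R *g divcm M (ucm u) >>.

Lemma pderivE u p : pderiv u p = msum (pderiv_term u) p.
Proof. by []. Qed.

Lemma pderiv_term0 u M : pderiv_term u M 0 = 0.
Proof. by rewrite /pderiv_term mul0r monalgU0. Qed.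

Lemma pderiv_is_nmod_morphism u : nmod_morphism (@pderiv n m T u).
Proof.
apply: (msum_is_nmod_morphism (pderiv_term0 u)) => M x y.
by rewrite /pderiv_term mulrDl raddfD.
Qed.

HB.instance Definition _ u :=
  GRing.isNmodMorphism.Build _ _ (@pderiv n m T u) (pderiv_is_nmod_morphism u).

Lemma pderivD u : {morph @pderiv n m T u : p q / p + q}.
Proof. exact: raddfD. Qed.

Lemma pderiv_sum u (I : Type) (r : seq I) (F : I -> dpoly n m T) :
  pderiv u (\sum_(i <- r) F i) = \sum_(i <- r) pderiv u (F i).
Proof. exact: raddf_sum. Qed.

Lemma pderivU u c M : pderiv u << c *g M >> = pderiv_term u M c.
Proof. by rewrite pderivE msumU //; apply: pderiv_term0. Qed.

Lemma pderivZ u c p : pderiv u (c *: p) = c *: pderiv u p.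
Proof.
rewrite !pderivE (msumEw (pderiv_term0 u) (msuppZ_le c p)) scaler_sumr.
by apply: eq_bigr => M _; rewrite /pderiv_term mcoeffZ malgZU mulrA.
Qed.

Lemma pderiv_neq0 u p : pderiv u p != 0 -> appears u p.
Proof.
apply: contraR => /appearsP up; rewrite pderivE /msum big1_seq // => M /andP[_ HM].
have [Mu|Mu] := eqVneq (M u) 0%N; first by rewrite /pderiv_term Mu mulr0 monalgU0.
by case: up; exists M.
Qed.

Definition coef_in_term v k M (c : T) : dpoly n m T :=
  if M v == k then << c *g divcm M (expcmn (ucm v) k) >> else 0.

Lemma coef_inE v k p : coef_in v k p = msum (coef_in_term v k) p.
Proof. by rewrite /coef_in big_mkcond. Qed.

Lemma coef_in_term0 v k M : coef_in_term v k M 0 = 0.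
Proof. by rewrite /coef_in_term monalgU0; case: ifP. Qed.

Lemma coef_in_neq0 v k p : coef_in v k p != 0 -> exists2 M, M \in msupp p & M v = k.
Proof.
move=> nz; suff /hasP[M HM /eqP Mv] : has (fun M => M v == k) (enum_fset (msupp p)).
  by exists M.
apply: contraNT nz => /hasPn nM; rewrite /coef_in big1_seq // => M /andP[Mv HM].
by have := nM M HM; rewrite Mv.
Qed.

End PartialDerivative.

Section DerivationExtension.
Variables (n m : nat) (T : comNzRingType) (d : 'I_m -> T -> T).
Implicit Types (p q g : dpoly n m T) (u v w : dvar n m) (M : dmonom n m).

Lemma dorder_delta k v : dorder (delta_var k v) = (dorder v).+1.
Proof.
rewrite /dorder /= (eq_bigr (fun j => (j == k) + v.2 j)%N) => [|j _].
  by rewrite big_split /= (bigD1 k) //= eqxx big1 // => j /negbTE->.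
by rewrite !ffunE.
Qed.

Lemma delta_var_inj k : injective (@delta_var n m k).
Proof.
move=> [i th] [j th'] [-> /ffunP eth]; congr (_, _); apply/ffunP => l.
by move: (eth l); rewrite !ffunE /= => /addnI.
Qed.

Lemma appears_dmon u k M : appears u (dmon T k M) ->
  M u != 0%N \/ exists2 v, M v != 0%N & u = delta_var k v.
Proof.
case/appears_sum=> v; rewrite -cmE_neq0 => Mv; rewrite malgUM => /appearsU.
rewrite cmM divcmE !cmU; have [<-|_] := eqVneq (delta_var k v) u.
  by right; exists v.
by rewrite addn0 => Mu; left; apply: contraNneq Mu => ->.
Qed.

Definition dext_term k M (c : T) : dpoly n m T := << d k c *g M >> + c *: dmon T k M.

Lemma dextE k g : dext d k g = msum (dext_term k) g.
Proof. by []. Qed.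

Lemma appears_dext u k g : appears u (dext d k g) ->
  appears u g \/ exists2 v, appears v g & u = delta_var k v.
Proof.
case/appears_sum=> M HM.
case/appearsD/orP=> [/appearsU Mu|/appearsZ/appears_dmon[Mu|[v Mv ->]]].
- by left; apply/appearsP; exists M.
- by left; apply/appearsP; exists M.
- by right; exists v => //; apply/appearsP; exists M.
Qed.

Lemma pderiv_dmon k w M : M (delta_var k w) = 0%N ->
  pderiv (delta_var k w) (dmon T k M) = << (M w)%:R *g divcm M (ucm w) >>.
Proof.
move=> Mdw; rewrite pderiv_sum.
transitivity (\sum_(v <- enum_fset (finsupp (cmonom_val M)) | v == w)
                << (M w)%:R *g divcm M (ucm w) >> : dpoly n m T).
  rewrite [RHS]big_mkcond; apply: eq_bigr => v _.
  rewrite malgUM pderivU /pderiv_term cmM divcmE !cmU Mdw sub0n add0n.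
  rewrite (inj_eq (@delta_var_inj k)); have [->|_] := eqVneq v w; last first.
    by rewrite mulr0 monalgU0.
  suff -> : divcm (mmul (divcm M (ucm w)) (ucm (delta_var k w))) (ucm (delta_var k w))
            = divcm M (ucm w) by rewrite !mulr1.
  by apply/eqP/cmP => i; rewrite !divcmE cmM divcmE !cmU addnK.
have [wM|wM] := boolP (w \in finsupp M).
  by rewrite -big_filter filter_pred1_uniq ?fset_uniq // big_seq1.
rewrite big1_seq => [|v /andP[/eqP-> wM']]; last by rewrite wM' in wM.
by move: wM; rewrite -cmE_eq0 => /eqP->; rewrite monalgU0.
Qed.

Lemma pderiv_dext k w g : ~~ appears (delta_var k w) g ->
  pderiv (delta_var k w) (dext d k g) = pderiv w g.
Proof.
move=> ndw; rewrite pderiv_sum pderivE; apply: eq_big_seq => M HM.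
have Mdw : M (delta_var k w) = 0%N.
  by apply/eqP; apply: contraNT ndw => Mdw; apply/appearsP; exists M.
rewrite pderivD pderivU pderivZ pderiv_dmon // /pderiv_term Mdw mulr0 monalgU0.
by rewrite add0r malgZU.
Qed.

Lemma theta_ind (P : dpoly n m T -> Prop) :
  (forall k q, P q -> P (dext d k q)) -> forall th q, P q -> P (theta d th q).
Proof.
move=> Pdext th q Pq; rewrite /theta; elim: (enum 'I_m) => //= k ks IH.
by elim: (th k) => //= j IHj; apply: Pdext.
Qed.

Lemma pderiv_theta th g w : (forall u, appears u g -> dorder u <= dorder w)%N ->
  exists w', pderiv w' (theta d th g) = pderiv w g.
Proof.
(* Along theta the variable w is replaced by successive derivatives w' of it;
   as w' has maximal order in q, delta_k w' does not occur in q, so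
   differentiating dext d k q with respect to delta_k w' gives back the
   derivative of q with respect to w'. *)
move=> le_gw.
pose P q := exists w', pderiv w' q = pderiv w g /\
  forall u, appears u q -> (dorder u <= dorder w')%N.
suff [w' [Dw' _]] : P (theta d th g) by exists w'.
apply: theta_ind; last by exists w.
move=> k q [w' [Dw' le_qw']]; exists (delta_var k w'); split.
  by rewrite pderiv_dext; last by apply/negP => /le_qw'; rewrite dorder_delta ltnn.
move=> u /appears_dext[/le_qw' le_uw'|[v /le_qw' le_vw' ->]]; rewrite !dorder_delta.
- exact: leqW.
- by rewrite ltnS.
Qed.

End DerivationExtension.

(** * Coefficient maps *)

Lemma theta_map (n m : nat) (T1 T2 : comNzRingType)
    (d1 : 'I_m -> T1 -> T1) (d2 : 'I_m -> T2 -> T2)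
    (f : dpoly n m T1 -> dpoly n m T2) :
  (forall k q, f (dext d1 k q) = dext d2 k (f q)) ->
  forall th q, f (theta d1 th q) = theta d2 th (f q).
Proof.
move=> f_dext th q; rewrite /theta; elim: (enum 'I_m) => [|k ks IH] /=; first by [].
by elim: (th k) => [|j IHj] /=; rewrite ?f_dext ?IHj.
Qed.

Section MapDpoly.
Variables (n m : nat) (R S : comNzRingType) (phi : {rmorphism R -> S}).
Local Notation mp := (@map_dpoly n m R S phi).
Implicit Types (p q f : dpoly n m R) (u v : dvar n m) (M : dmonom n m).

Lemma map_dpoly_term0 M : << phi 0 *g M >> = 0 :> dpoly n m S.
Proof. by rewrite rmorph0 monalgU0. Qed.

Lemma map_dpoly_is_nmod_morphism : nmod_morphism mp.
Proof.
apply: (@msum_is_nmod_morphism _ _ _ (fun M c => << phi c *g M >>) map_dpoly_term0).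
by move=> M x y; rewrite rmorphD monalgUD.
Qed.

HB.instance Definition _ :=
  GRing.isNmodMorphism.Build _ _ mp map_dpoly_is_nmod_morphism.

Lemma map_dpolyD : {morph mp : p q / p + q}.
Proof. exact: raddfD. Qed.

Lemma map_dpoly_sum (I : Type) (r : seq I) (F : I -> dpoly n m R) :
  mp (\sum_(i <- r) F i) = \sum_(i <- r) mp (F i).
Proof. exact: raddf_sum. Qed.

Lemma map_dpolyU c M : mp << c *g M >> = << phi c *g M >>.
Proof. exact: (@msumU _ _ _ (fun M c => << phi c *g M >>) map_dpoly_term0). Qed.

Lemma mcoeff_map_dpoly p M : (mp p)@_M = phi p@_M.
Proof.
rewrite {2}(monalgE p) {1}(monalgE p) map_dpoly_sum.
rewrite !(big_morph _ (mcoeffD M) (mcoeff0 M)) rmorph_sum.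
by apply: eq_bigr => M' _; rewrite map_dpolyU !mcoeffU rmorphMn.
Qed.

Lemma msupp_map_dpoly p : msupp (mp p) `<=` msupp p.
Proof.
apply/fsubsetP => M; rewrite -!mcoeff_neq0 mcoeff_map_dpoly.
by apply: contra => /eqP->; rewrite rmorph0.
Qed.

Lemma map_dpoly_is_monoid_morphism : monoid_morphism mp.
Proof.
split=> [|p q]; first by rewrite -mpolyC1E map_dpolyU rmorph1 mpolyC1E.
apply/malgP => M; rewrite mcoeff_map_dpoly.
rewrite (mcoeffMlw _ (msupp_map_dpoly p) (msupp_map_dpoly q)) mcoeffMl rmorph_sum.
apply: eq_bigr => M1 _; rewrite rmorph_sum; apply: eq_bigr => M2 _.
by rewrite rmorphMn rmorphM !mcoeff_map_dpoly.
Qed.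

HB.instance Definition _ :=
  GRing.isMonoidMorphism.Build _ _ mp map_dpoly_is_monoid_morphism.

Lemma map_dpolyM : {morph mp : p q / p * q}.
Proof. exact: rmorphM. Qed.

Lemma map_dpolyB : {morph mp : p q / p - q}.
Proof. exact: rmorphB. Qed.

Lemma map_dpolyX p k : mp (p ^+ k) = mp p ^+ k.
Proof. exact: rmorphXn. Qed.

Lemma map_dpoly_prod (I : Type) (r : seq I) (F : I -> dpoly n m R) :
  mp (\prod_(i <- r) F i) = \prod_(i <- r) mp (F i).
Proof. exact: rmorph_prod. Qed.

(* The images are parameters so that the whole expression is rewritten in one
   step; rewriting its subterms one at a time triggers very costly conversions. *)
Lemma map_dpoly_coherence_expr (h a b c e : dpoly n m R)
    (h' a' b' c' e' : dpoly n m S) N :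
  mp h = h' -> mp a = a' -> mp b = b' -> mp c = c' -> mp e = e' ->
  mp (h ^+ N * (a * b - c * e)) = h' ^+ N * (a' * b' - c' * e').
Proof.
move=> <- <- <- <- <-; rewrite map_dpolyM map_dpolyX map_dpolyB.
by congr (_ * (_ - _)); apply: map_dpolyM.
Qed.

Lemma map_dpolyZ c p : mp (c *: p) = phi c *: mp p.
Proof. by rewrite -!mul_malgC map_dpolyM map_dpolyU. Qed.

Lemma map_dpoly_msum (FR : dmonom n m -> R -> dpoly n m R)
    (FS : dmonom n m -> S -> dpoly n m S) p :
  (forall M, FS M 0 = 0) -> (forall M c, mp (FR M c) = FS M (phi c)) ->
  mp (msum FR p) = msum FS (mp p).
Proof.
move=> FS0 mpF; rewrite (msumEw FS0 (msupp_map_dpoly p)) map_dpoly_sum.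
by apply: eq_bigr => M _; rewrite mpF mcoeff_map_dpoly.
Qed.

Lemma map_dpoly_pderiv u p : mp (pderiv u p) = pderiv u (mp p).
Proof.
rewrite !pderivE; apply: map_dpoly_msum => [M|M c]; first exact: pderiv_term0.
by rewrite map_dpolyU rmorphM rmorph_nat.
Qed.

Lemma map_dpoly_coef_in v k p : mp (coef_in v k p) = coef_in v k (mp p).
Proof.
rewrite !coef_inE; apply: map_dpoly_msum => [M|M c]; first exact: coef_in_term0.
by rewrite /coef_in_term; case: ifP; rewrite ?map_dpolyU ?raddf0.
Qed.

Lemma appears_map_dpoly u p : appears u (mp p) -> appears u p.
Proof.
case/appearsP=> M /(fsubsetP (msupp_map_dpoly p)) HM Mu.
by apply/appearsP; exists M.
Qed.

Lemma degv_map_dpoly v p : (degv v (mp p) <= degv v p)%N.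
Proof.
apply/bigmax_leqP_seq => M HM _; apply: leq_bigmax_seq => //.
exact: (fsubsetP (msupp_map_dpoly p)).
Qed.

End MapDpoly.

Lemma separantE (n m : nat) (T : comNzRingType) (p : dpoly n m T) v :
  leader p = Some v -> separant p = pderiv v p.
Proof. by rewrite /separant => ->. Qed.

Lemma initialE (n m : nat) (T : comNzRingType) (p : dpoly n m T) v :
  leader p = Some v -> initial p = coef_in v (degv v p) p.
Proof. by rewrite /initial => ->. Qed.

Lemma leader_theta (n m : nat) (T : comNzRingType) (d : 'I_m -> T -> T) th
    (g : dpoly n m T) v :
  leader g = Some v -> separant g != 0 -> leader (theta d th g) != None.
Proof.
move=> lg; rewrite (separantE lg) => sep_g; have [_ max_v] := leaderP lg.
have [w' Dw'] := pderiv_theta d th (fun u gu => rank_le_dorder (max_v u gu)).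
by apply: (@appears_leader _ _ _ w'); apply: pderiv_neq0; rewrite Dw'.
Qed.

Section MapLeader.
Variables (n m : nat) (R S : comNzRingType) (phi : {rmorphism R -> S}).
Local Notation mp := (@map_dpoly n m R S phi).
Implicit Types (f : dpoly n m R) (v : dvar n m).

Lemma leader_map_dpoly f v : leader f = Some v -> mp (separant f) != 0 ->
  leader (mp f) = Some v.
Proof.
move=> lf sep_f; have [_ max_v] := leaderP lf.
apply: leader_eq => [|u /appears_map_dpoly/max_v//].
by apply: pderiv_neq0; rewrite -map_dpoly_pderiv -(separantE lf).
Qed.

Lemma separant_map_dpoly f v : leader f = Some v -> mp (separant f) != 0 ->
  separant (mp f) = mp (separant f).
Proof.
move=> lf sep_f.
by rewrite (separantE lf) (separantE (leader_map_dpoly lf sep_f)) map_dpoly_pderiv.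
Qed.

Lemma degv_map_dpoly_leader f v : leader f = Some v -> mp (initial f) != 0 ->
  degv v (mp f) = degv v f.
Proof.
move=> lf init_f; apply/eqP; rewrite eqn_leq degv_map_dpoly /=.
move: init_f; rewrite (initialE lf) map_dpoly_coef_in => /coef_in_neq0[M HM <-].
exact: leq_bigmax_seq.
Qed.

Lemma initial_map_dpoly f v : leader f = Some v -> mp (separant f) != 0 ->
  mp (initial f) != 0 -> initial (mp f) = mp (initial f).
Proof.
move=> lf sep_f init_f; rewrite (initialE lf) (initialE (leader_map_dpoly lf sep_f)).
by rewrite (degv_map_dpoly_leader lf init_f) map_dpoly_coef_in.
Qed.

End MapLeader.

Section MapDerivation.
Variables (n m : nat) (R S : comNzRingType) (phi : {rmorphism R -> S}).
Variables (dR : 'I_m -> R -> R) (dS : 'I_m -> S -> S).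
Hypothesis dS0 : forall k, dS k 0 = 0.
Hypothesis phi_d : forall k a, phi (dR k a) = dS k (phi a).
Local Notation mp := (@map_dpoly n m R S phi).

Lemma map_dpoly_dmon k (M : dmonom n m) : mp (dmon R k M) = dmon S k M.
Proof.
rewrite map_dpoly_sum; apply: eq_bigr => v _.
by rewrite !malgUM !mulr1 map_dpolyU rmorph_nat.
Qed.

Lemma map_dpoly_dext k p : mp (dext dR k p) = dext dS k (mp p).
Proof.
rewrite !dextE; apply: map_dpoly_msum => [M|M c].
  by rewrite /dext_term dS0 monalgU0 scale0r addr0.
by rewrite /dext_term map_dpolyD map_dpolyU map_dpolyZ map_dpoly_dmon phi_d.
Qed.

Lemma map_dpoly_theta th p : mp (theta dR th p) = theta dS th (mp p).
Proof. exact: theta_map map_dpoly_dext th p. Qed.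

End MapDerivation.

(** * The image of a coherent set *)

Lemma derivation0 (T : comNzRingType) (D : T -> T) : is_derivation D -> D 0 = 0.
Proof. by case=> D_add _; apply: (addrI (D 0)); rewrite -D_add !addr0. Qed.

Lemma prodr_seq_mul_neq0 (T : comNzRingType) (I : eqType) (r : seq I)
    (F G : I -> T) i :
  i \in r -> \prod_(j <- r) (F j * G j) != 0 -> F i != 0 /\ G i != 0.
Proof.
move=> ir; rewrite (big_rem i) //= => nz.
by split; apply: contraNneq nz => ->; rewrite ?mulr0 !mul0r.
Qed.

Lemma in_ideal_map_dpoly (n m : nat) (R S : comNzRingType)
    (phi : {rmorphism R -> S}) (P : dpoly n m R -> Prop) (Q : dpoly n m S -> Prop) q :
  (forall x, P x -> Q (map_dpoly phi x)) ->
  in_ideal P q -> in_ideal Q (map_dpoly phi q).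
Proof.
move=> PQ [r [Pr ->]]; exists [seq (map_dpoly phi pr.1, map_dpoly phi pr.2) | pr <- r].
split; first by move=> _ /mapP[pr pr_r ->]; apply/PQ/Pr.
by rewrite big_map map_dpoly_sum; apply: eq_bigr => pr _; rewrite map_dpolyM.
Qed.

Section CoherentImage.
Variables (n m : nat) (R S : comNzRingType) (phi : {rmorphism R -> S}).
Variables (dR : 'I_m -> R -> R) (dS : 'I_m -> S -> S).
Hypothesis dS0 : forall k, dS k 0 = 0.
Hypothesis phi_d : forall k a, phi (dR k a) = dS k (phi a).
Variable L : {fset dpoly n m R}.
Hypothesis cohL : coherent dR L.
Local Notation mp := (@map_dpoly n m R S phi).
Hypothesis mpH_neq0 : mp (H_of L) != 0.
Local Notation L' := [fset mp f | f in L].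
Implicit Types (f g : dpoly n m R).

Lemma map_initial_separant_neq0 f : f \in L ->
  mp (initial f) != 0 /\ mp (separant f) != 0.
Proof.
move=> fL; have mpH : mp (H_of L) =
    \prod_(g <- enum_fset L) (mp (initial g) * mp (separant g)).
  by rewrite /H_of map_dpoly_prod; apply: eq_bigr => g _; apply: map_dpolyM.
by move: mpH_neq0; rewrite mpH; apply: prodr_seq_mul_neq0.
Qed.

Lemma leader_mem f : f \in L -> exists v, leader f = Some v.
Proof.
case: cohL => L_nconst _ _ fL.
by case E: (leader f) (L_nconst f fL) => [v|//] _; exists v.
Qed.

Lemma map_dpoly_inj f g : f \in L -> g \in L -> mp f = mp g -> f = g.
Proof.
move=> fL gL mpfg; apply/eqP/negPn/negP => nfg.
have [v lf] := leader_mem fL; have [w lg] := leader_mem gL.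
have [if0 sf0] := map_initial_separant_neq0 fL.
have [ig0 sg0] := map_initial_separant_neq0 gL.
have vw : v = w.
  by have := leader_map_dpoly lf sf0; rewrite mpfg (leader_map_dpoly lg sg0) => -[].
subst w.
case: cohL => _ autored _; have [_ deg_lt] := autored f g v fL gL nfg lf.
have := deg_lt (proj1 (leaderP lg)).
rewrite -[X in (_ < X)%N](degv_map_dpoly_leader lf if0) mpfg.
by rewrite [X in (_ < X)%N](degv_map_dpoly_leader lg ig0) ltnn.
Qed.

Lemma mem_map_dpoly_fset (p : dpoly n m S) :
  p \in L' -> exists2 f : dpoly n m R, f \in L & p = mp f.
Proof. by case/imfsetP=> f fL ->; exists f. Qed.

Lemma H_of_map_dpoly : H_of L' = mp (H_of L).
Proof.
rewrite /H_of map_dpoly_prod big_imfset /=; last first.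
  by move=> f g fL gL; apply: map_dpoly_inj.
rewrite (perm_big (enum_fset L)); last by apply: uniq_perm; rewrite ?fset_uniq.
apply: eq_big_seq => f fL; have [v lf] := leader_mem fL.
have [init_f sep_f] := map_initial_separant_neq0 fL.
by rewrite (initial_map_dpoly lf sep_f init_f) (separant_map_dpoly lf sep_f) map_dpolyM.
Qed.

Lemma Lambda_lt_map_dpoly v q : Lambda_lt dR L v q -> Lambda_lt dS L' v (mp q).
Proof.
case=> f [th [fL -> [w [lw wv]]]]; exists (mp f), th.
rewrite (map_dpoly_theta dS0 phi_d); split=> //; first exact: in_imfset.
have [v0 lf] := leader_mem fL; have [_ sep_f] := map_initial_separant_neq0 fL.
have := leader_theta dS th (leader_map_dpoly lf sep_f).
rewrite (separant_map_dpoly lf sep_f) => /(_ sep_f).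
case E: leader => [w'|//] _; exists w'; split=> //.
have := proj1 (leaderP E); rewrite -(map_dpoly_theta dS0 phi_d).
case/appears_map_dpoly/(proj2 (leaderP lw))/orP => [/eqP->//|w'w].
exact: rank_lt_trans w'w wv.
Qed.

Lemma coherent_map_dpoly : coherent dS L'.
Proof.
case: cohL => _ autored coh; split.
- move=> _ /mem_map_dpoly_fset[f fL ->]; have [v lf] := leader_mem fL.
  have [_ sep_f] := map_initial_separant_neq0 fL.
  by rewrite (leader_map_dpoly lf sep_f).
- move=> _ _ v /mem_map_dpoly_fset[f fL ->] /mem_map_dpoly_fset[g gL ->] nfg' lf'.
  have [v0 lf] := leader_mem fL; have [init_f sep_f] := map_initial_separant_neq0 fL.
  move: lf'; rewrite (leader_map_dpoly lf sep_f) => -[<-].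
  have nfg : f != g by apply: contraNneq nfg' => ->.
  have [no_der deg_lt] := autored f g v0 fL gL nfg lf; split.
    by move=> th th1; apply: contra (no_der th th1); apply: appears_map_dpoly.
  move=> /appears_map_dpoly/deg_lt; rewrite -(degv_map_dpoly_leader lf init_f).
  exact: leq_ltn_trans (degv_map_dpoly _ _ _).
- move=> _ _ vf vg thf thg /mem_map_dpoly_fset[f fL ->] /mem_map_dpoly_fset[g gL ->].
  move=> nfg' lf' lg' eq_v min_v.
  have [v lf] := leader_mem fL; have [_ sep_f] := map_initial_separant_neq0 fL.
  have [w lg] := leader_mem gL; have [_ sep_g] := map_initial_separant_neq0 gL.
  move: lf'; rewrite (leader_map_dpoly lf sep_f) => -[Ev].
  move: lg'; rewrite (leader_map_dpoly lg sep_g) => -[Ew]; subst vf vg.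
  have nfg : f != g by apply: contraNneq nfg' => ->.
  have [N HN] := coh f g v w thf thg fL gL nfg lf lg eq_v min_v; exists N.
  rewrite -(map_dpoly_coherence_expr N (esym H_of_map_dpoly)
    (esym (separant_map_dpoly lg sep_g)) (map_dpoly_theta dS0 phi_d thf f)
    (esym (separant_map_dpoly lf sep_f)) (map_dpoly_theta dS0 phi_d thg g)).
  exact: in_ideal_map_dpoly (@Lambda_lt_map_dpoly _) HN.
Qed.

End CoherentImage.

Unset Implicit Arguments.

Theorem lemma2p3 (n m : nat) (R S : comNzRingType)
  (dR : 'I_m -> R -> R) (dS : 'I_m -> S -> S) (phi : {rmorphism R -> S}) :
  diff_ring_str dR -> diff_ring_str dS ->
  (forall k (a : R), phi (dR k a) = dS k (phi a)) ->
  forall L : {fset dpoly n m R},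
  coherent dR L ->
  map_dpoly phi (H_of L) != 0 ->
  H_of [fset map_dpoly phi f | f in L] = map_dpoly phi (H_of L) /\
  coherent dS [fset map_dpoly phi f | f in L].
Proof.
move=> _ [dS_der _] phi_d L cohL mpH_neq0.
have dS0 k : dS k 0 = 0 := derivation0 (dS_der k).
split; first exact: (H_of_map_dpoly cohL mpH_neq0).
exact: (coherent_map_dpoly dS0 phi_d cohL mpH_neq0).
Qed.
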